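(* $\mu(C(4,7))=3$.
   Context: For even $k$, the circulant $C(k,n)$ is the graph on vertex set $\{1,\dots,n\}$ in which distinct $i<j$ are adjacent iff $\min(j-i,\ i+n-j)\le k/2$. For a simple graph $G=(V,E)$ on $n$ vertices, a fractional vertex cover is a function $f:V\to[0,\infty)$ with $f(u)+f(v)\ge 1$ for every edge $uv$; $\tau^*(G)$ is the minimum of $\sum_v f(v)$ over these. For $E'\subseteq E$ let $G-E'=(V,E\setminus E')$, and $\mu(G)=\min\{|E'|: E'\subseteq E,\ \tau^*(G-E')<n/2\}$. *)

From HB Require Import structures.
From mathcomp Require Import all_boot all_order all_algebra.
From mathcomp Require Import boolp classical_sets reals.
Set Implicit Arguments. Unset Strict Implicit. Unset Printing Implicit Defensive.
Import Order.TTheory GRing.Theory Num.Theory.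
Local Open Scope ring_scope.


(* A simple graph on a finite vertex type T is given by its edge set:
   a set of 2-element subsets of T. *)

(* Circulant C(k,n): vertices 'I_n (vertex i stands for i+1 in {1..n});
   distinct i<j adjacent iff min(j-i, i+n-j) <= k/2. *)
Definition circulant (k n : nat) : {set {set 'I_n}} :=
  [set [set i; j] | i in 'I_n, j in 'I_n &
     (i < j)%N && (minn (j - i) (i + n - j) <= k./2)%N].

Definition frac_vcover (R : realType) (T : finType) (E : {set {set T}})
  (f : T -> R) : Prop :=
  (forall v, 0 <= f v) /\
  (forall u v : T, u != v -> [set u; v] \in E -> 1 <= f u + f v).

Definition tau_star (R : realType) (T : finType) (E : {set {set T}}) : R :=
  inf [set s | exists f : T -> R, frac_vcover E f /\ s = \sum_(v : T) f v]%classic.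

(* mu(G) = min { |E'| : E' subset of E, tau*(G - E') < n/2 }, n = |V|.
   (If no such E' existed, the value would default to |E|+1; irrelevant here.) *)
Definition mu (R : realType) (T : finType) (E : {set {set T}}) : nat :=
  \big[minn/#|E|.+1]_(E' : {set {set T}} |
      (E' \subset E) && `[< tau_star R (E :\: E') < (#|T|%:R / 2%:R) >])
    #|E'|.

From HB Require Import structures.
From mathcomp Require Import all_boot all_order all_algebra.
From mathcomp Require Import boolp classical_sets reals.
From mathcomp Require Import lra.
Set Implicit Arguments. Unset Strict Implicit. Unset Printing Implicit Defensive.
Import Order.TTheory GRing.Theory Num.Theory.
Local Open Scope ring_scope.

(* Summing the constraints f u + f v >= 1 along a spanning cycle counts every
   vertex twice, so tau* >= n/2 as long as some spanning cycle survives the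
   deletion of E'.  C(4,7) is the square of the 7-cycle, and for any two of its
   edges one of the eight Hamiltonian cycles in [ham_cycles47] avoids both;
   hence mu >= 3.  Deleting {1,2}, {1,6} and {5,6} leaves {3,4,7} as a vertex
   cover, so tau* <= 3 < 7/2 and mu <= 3. *)

Lemma set2_inj (T : finType) (i j u v : T) :
  [set i; j] = [set u; v] -> (i = u /\ j = v) \/ (i = v /\ j = u).
Proof.
move=> eq_ij_uv.
have: i \in [set u; v] by rewrite -eq_ij_uv set21.
have: j \in [set u; v] by rewrite -eq_ij_uv set22.
have: u \in [set i; j] by rewrite eq_ij_uv set21.
have: v \in [set i; j] by rewrite eq_ij_uv set22.
by rewrite !inE => /orP[]/eqP? /orP[]/eqP? /orP[]/eqP? /orP[]/eqP?; subst; auto.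
Qed.

Lemma subset_set2_of_card_le2 (T : finType) (x0 : T) (A : {set T}) :
  (#|A| <= 2)%N -> exists x y, A \subset [set x; y].
Proof.
rewrite cardE; case def_A: (enum A) => [|x [|y [|? ?]]] // _;
  [exists x0, x0 | exists x, x | exists x, y];
  by apply/fintype.subsetP => z; rewrite -mem_enum def_A !inE => z_A; rewrite ?z_A.
Qed.

Lemma card_set_seq_le (T : finType) (s : seq T) : (#|[set:: s]| <= size s)%N.
Proof. by rewrite cardsE card_size. Qed.

Lemma all_iota_ord n (P : pred nat) : all P (iota 0 n) -> forall i : 'I_n, P i.
Proof. by move=> /allP P_all i; apply: P_all; rewrite mem_iota ltn_ord. Qed.

Definition spanning_cycle (T : eqType) (V : seq T) (r : rel T) (s : seq T) : bool :=
  perm_eq s V && cycle r s.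

Lemma sub_spanning_cycle (T : eqType) (V : seq T) (r r' : rel T) s :
  subrel r r' -> spanning_cycle V r s -> spanning_cycle V r' s.
Proof. by move=> rr' /andP[s_perm /(sub_cycle rr') cyc]; apply/andP. Qed.

Lemma spanning_cycle_ord n (r : rel nat) s :
  spanning_cycle (iota 0 n) r s -> spanning_cycle (enum 'I_n) (relpre val r) (pmap insub s).
Proof.
move=> /andP[s_perm cyc].
have s_val : map val (pmap insub s : seq 'I_n) = s.
  rewrite (pmap_filter (insubK _)); apply/all_filterP/allP => i.
  by rewrite isSome_insub (perm_mem s_perm) mem_iota.
rewrite /spanning_cycle -cycle_map s_val cyc andbT; apply: (perm_map_inj val_inj).
by rewrite val_enum_ord s_val.
Qed.

Section FractionalCover.
Variables (R : realType) (T : finType).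
Implicit Types (E : {set {set T}}) (f : T -> R) (s : seq T).

Definition adj E : rel T := fun u v => (u != v) && ([set u; v] \in E).

Lemma sum_next f s : uniq s -> \sum_v f (next s v) = \sum_v f v.
Proof. by move=> us; rewrite [RHS](reindex_inj (can_inj (prev_next us))). Qed.

Lemma half_card_le_sum_frac_vcover E f s :
  frac_vcover E f -> spanning_cycle (enum T) (adj E) s -> #|T|%:R / 2%:R <= \sum_v f v.
Proof.
move=> [_ f_edge] /andP[s_perm cyc].
have us : uniq s by rewrite (perm_uniq s_perm) enum_uniq.
have s_all v : v \in s by rewrite (perm_mem s_perm) mem_enum.
have edge_next v : 1 <= f v + f (next s v).
  by have /andP[] := next_cycle cyc (s_all v); exact: f_edge.
have : \sum_(v : T) (1 : R) <= \sum_v (f v + f (next s v)).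
  by apply: ler_sum => v _; exact: edge_next.
rewrite sumr_const big_split /= sum_next //; lra.
Qed.

Lemma tau_star_ge E x :
  (forall f, frac_vcover E f -> x <= \sum_v f v) -> x <= tau_star R E.
Proof.
move=> f_ge; apply: lb_le_inf => [|_ [f [cf ->]]]; last exact: f_ge.
exists (\sum_(v : T) (1 : R)), (fun=> 1); split=> //; split=> *; lra.
Qed.

Lemma tau_star_le E f : frac_vcover E f -> tau_star R E <= \sum_v f v.
Proof.
move=> cf; apply: ge_inf; last by exists f.
by exists 0 => _ [g [[g_ge0 _] ->]]; exact: sumr_ge0.
Qed.

Lemma tau_star_le_vertex_cover E (S : {set T}) :
  (forall u v, adj E u v -> (u \in S) || (v \in S)) -> tau_star R E <= #|S|%:R.
Proof.
move=> S_cover; pose f v : R := if v \in S then 1 else 0.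
have -> : #|S|%:R = \sum_v f v by rewrite -big_mkcond sumr_const.
apply: tau_star_le; split=> [v|u v uv Euv]; first by rewrite /f; case: ifP.
by rewrite /f; case/orP: (S_cover u v (introT andP (conj uv Euv))) => ->;
  case: ifP => _; lra.
Qed.

Lemma half_card_le_tau_star E s :
  spanning_cycle (enum T) (adj E) s -> #|T|%:R / 2%:R <= tau_star R E.
Proof. by move=> sc; apply: tau_star_ge => f cf; exact: half_card_le_sum_frac_vcover sc. Qed.

Lemma mu_eq E (E0 : {set {set T}}) m :
  E0 \subset E -> (#|E0| <= m)%N -> tau_star R (E :\: E0) < #|T|%:R / 2%:R ->
  (forall E', E' \subset E -> (#|E'| < m)%N -> #|T|%:R / 2%:R <= tau_star R (E :\: E')) ->
  mu R E = m.
Proof.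
move=> sE0 cE0 tau_lt tau_ge.
have m_le_E0 : (m <= #|E0|)%N by rewrite leqNgt; apply/negP => /(tau_ge _ sE0); lra.
rewrite /mu -minEnat; apply/eqP; rewrite eq_le; apply/andP; split.
  rewrite leEnat (leq_trans _ cE0) // -leEnat.
  by apply: bigmin_le_cond; rewrite sE0; exact/asboolP.
apply: le_bigmin => [|E' /andP[sE' /asboolP tauE']].
  by rewrite leEnat (leq_trans m_le_E0) // ltnW // ltnS subset_leq_card.
by rewrite leEnat leqNgt; apply/negP => /(tau_ge _ sE'); lra.
Qed.

End FractionalCover.

(* Adjacency in C(k,n) is decided on [nat]: [enum] and [#|_|] on finite types
   are locked and do not reduce under [vm_compute]. *)
Definition circ_near (k n i j : nat) : bool := (minn (j - i) (i + n - j) <= k./2)%N.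

Definition circ_adj (k n : nat) : rel nat :=
  fun u v => ((u < v)%N && circ_near k n u v) || ((v < u)%N && circ_near k n v u).

Lemma adj_circulant k n (u v : 'I_n) : adj (circulant k n) u v = circ_adj k n u v.
Proof.
rewrite /adj /circulant; apply/andP/idP => [[_ /imset2P[i j _]]|].
  rewrite inE => /and3P[_ ij near] /set2_inj[[-> ->]|[-> ->]].
  - by rewrite /circ_adj /circ_near ij near.
  - by rewrite /circ_adj /circ_near ij near orbT.
case/orP=> /andP[lt near];
  (split; first by rewrite -val_eqE neq_ltn lt ?orbT); apply/imset2P.
- by exists u v => //; rewrite inE lt.
- by exists v u => //; [rewrite inE lt | rewrite finset.setUC].
Qed.

Definition ord_set n (s : seq nat) : {set 'I_n.+1} := [set:: map inord s].

Definition ord_edges n (es : seq (nat * nat)) : {set {set 'I_n.+1}} :=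
  [set:: [seq [set inord e.1; inord e.2] | e <- es]].

Lemma mem_ord_set n s (u : 'I_n.+1) : val u \in s -> u \in ord_set n s.
Proof. by move=> us; rewrite inE -[u]inord_val map_f. Qed.

Lemma mem_ord_edges n es (u v : 'I_n.+1) :
  (val u, val v) \in es -> [set u; v] \in ord_edges n es.
Proof.
move=> uv; rewrite inE -[u]inord_val -[v]inord_val.
exact: (map_f (fun e => [set inord e.1; inord e.2]) uv).
Qed.

Lemma ord_edges_sub_circulant k n es :
  all (fun e => [&& e.1 <= n, e.2 <= n & circ_adj k n.+1 e.1 e.2]%N) es ->
  ord_edges n es \subset circulant k n.+1.
Proof.
move=> /allP es_adj; apply/fintype.subsetP => e; rewrite inE.
case/mapP=> -[i j] /es_adj /and3P[/= i_le j_le ij_adj] ->.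
have : adj (circulant k n.+1) (inord i) (inord j) by rewrite adj_circulant !inordK.
by case/andP.
Qed.

Definition avoiding (r : rel nat) (es : seq (nat * nat)) : rel nat :=
  fun u v => [&& r u v, (u, v) \notin es & (v, u) \notin es].

Definition ham_cycles47 : seq (seq nat) :=
  [:: [:: 0; 1; 2; 3; 4; 5; 6]; [:: 0; 1; 2; 3; 4; 6; 5];
      [:: 0; 1; 3; 5; 6; 4; 2]; [:: 0; 1; 6; 4; 5; 3; 2];
      [:: 0; 2; 1; 3; 5; 4; 6]; [:: 0; 2; 4; 3; 1; 6; 5];
      [:: 0; 5; 3; 4; 2; 1; 6]; [:: 0; 5; 4; 2; 3; 1; 6]].

Lemma ham_cycles47_avoiding (a b c d : 'I_7) :
  has (spanning_cycle (iota 0 7) (avoiding (circ_adj 4 7) [:: (val a, val b); (val c, val d)]))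
    ham_cycles47.
Proof.
have all_pairs : all (fun a => all (fun b => all (fun c => all (fun d =>
    has (spanning_cycle (iota 0 7) (avoiding (circ_adj 4 7) [:: (a, b); (c, d)]))
      ham_cycles47) (iota 0 7)) (iota 0 7)) (iota 0 7)) (iota 0 7).
  by vm_compute.
exact: all_iota_ord (all_iota_ord (all_iota_ord (all_iota_ord all_pairs a) b) c) d.
Qed.

Lemma circulant47_tau_star_ge (R : realType) (E' : {set {set 'I_7}}) :
  E' \subset circulant 4 7 -> (#|E'| < 3)%N ->
  #|'I_7|%:R / 2%:R <= tau_star R (circulant 4 7 :\: E').
Proof.
move=> sE' cE'.
have [x [y sE'xy]] := subset_set2_of_card_le2 finset.set0 cE'.
have edge_of e : exists a b : 'I_7, e \in circulant 4 7 -> e = [set a; b].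
  case: (boolP (e \in circulant 4 7)) => [/imset2P[a b _ _ ->]|_]; first by exists a, b.
  by exists ord0, ord0.
have [a [b xab]] := edge_of x; have [c [d ycd]] := edge_of y.
have /hasP[s _ s_cyc] := ham_cycles47_avoiding a b c d.
apply: half_card_le_tau_star (sub_spanning_cycle _ (spanning_cycle_ord s_cyc)).
move=> u v /and3P[uv_adj uv_new vu_new].
have uv_E' : [set u; v] \notin E'.
  apply/negP => uvE'; have uvE := fintype.subsetP sE' _ uvE'.
  have eq_edge : [set u; v] = [set a; b] \/ [set u; v] = [set c; d].
    case/set2P: (fintype.subsetP sE'xy _ uvE') => eq_uv; rewrite eq_uv in uvE *.
    - by left; exact: xab.
    - by right; exact: ycd.
  case: eq_edge => /set2_inj[[eq_u eq_v]|[eq_u eq_v]]; move: uv_new vu_new;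
    by rewrite /= eq_u eq_v !inE !eqxx ?orbT.
by move: uv_adj; rewrite /= -adj_circulant /adj finset.in_setD uv_E'.
Qed.

Definition removed47 : seq (nat * nat) := [:: (0, 1); (0, 5); (4, 5)].

Definition cover47 : seq nat := [:: 2; 3; 6].

Lemma circulant47_tau_star_lt (R : realType) :
  tau_star R (circulant 4 7 :\: ord_edges 6 removed47) < #|'I_7|%:R / 2%:R.
Proof.
have covers : all (fun i => all (fun j => circ_adj 4 7 i j ==>
    [|| (i, j) \in removed47, (j, i) \in removed47, i \in cover47 | j \in cover47])
  (iota 0 7)) (iota 0 7) by vm_compute.
have cover : forall u v, adj (circulant 4 7 :\: ord_edges 6 removed47) u v ->
    (u \in ord_set 6 cover47) || (v \in ord_set 6 cover47).
  move=> u v /andP[uv]; rewrite finset.in_setD => /andP[uv_E0 uv_E].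
  have uv_adj : circ_adj 4 7 u v by rewrite -adj_circulant /adj uv uv_E.
  have := all_iota_ord (all_iota_ord covers u) v; rewrite uv_adj /= => /or4P[] h.
  - by case/negP: uv_E0; exact: mem_ord_edges.
  - by case/negP: uv_E0; rewrite finset.setUC; exact: mem_ord_edges.
  - by rewrite (mem_ord_set h).
  - by rewrite (mem_ord_set h) orbT.
have := tau_star_le_vertex_cover R cover.
have : (#|ord_set 6 cover47| <= 3)%N by rewrite (leq_trans (card_set_seq_le _)) ?size_map.
rewrite card_ord -(ler_nat R); lra.
Qed.

Theorem lemma33 (R : realType) : mu R (circulant 4 7) = 3%N.
Proof.
apply: (mu_eq (E0 := ord_edges 6 removed47)).
- exact: ord_edges_sub_circulant.
- by rewrite (leq_trans (card_set_seq_le _)) ?size_map.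
- exact: circulant47_tau_star_lt.
- exact: circulant47_tau_star_ge.
Qed.
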